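(* If $(S,K,I)$ is a split graph and $C$ is an induced cycle in the factor graph $\Phi(S)$, then $|C|\neq 5$.
   Context: A split graph $(S,K,I)$ is a graph $S$ together with a fixed partition $V(S)=K\dot\cup I$, where $K$ is a clique and $I$ is an independent set. For a vertex $v$ of $S$, $N_v$ denotes its open neighborhood in $S$ and $d_v=|N_v|$; $\eta_{uv}=|N_u\cap N_v|$. The factor graph $\Phi(S)$ is the loopless multigraph with vertex set $I$ in which, for distinct $u,v\in I$, there is one edge joining $u$ and $v$ for each 2-switch of $S$ acting on $u$ and $v$ (a 2-switch replaces edges $ab,cd$ with $ac,bd$ when $ab,cd\in E(S)$ and $ac,bd\notin E(S)$); equivalently, the multiplicity of $uv$ is $\sigma_{uv}=(d_u-\eta_{uv})(d_v-\eta_{uv})$, and $u,v$ are adjacent iff $\sigma_{uv}>0$. An induced cycle $C=v_1\ldots v_nv_1$ ($n\geq 3$) in $\Phi(S)$ consists of distinct vertices with $v_iv_{i+1}$ and $v_nv_1$ adjacent and no other pair adjacent (multiplicities ignored); $|C|=n$. *)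

From mathcomp Require Import all_boot.
Set Implicit Arguments. Unset Strict Implicit. Unset Printing Implicit Defensive.

Definition simple_graph (V : finType) (e : rel V) : Prop :=
  symmetric e /\ irreflexive e.

Definition split_graph (V : finType) (e : rel V) (K I : {set V}) : Prop :=
  [/\ simple_graph e,
      K :&: I = set0,
      K :|: I = [set: V],
      (forall x y, x \in K -> y \in K -> x != y -> e x y)
    & (forall x y, x \in I -> y \in I -> ~~ e x y)].

Definition nbhd (V : finType) (e : rel V) (v : V) : {set V} := [set w | e v w].
Definition deg (V : finType) (e : rel V) (v : V) : nat := #|nbhd e v|.
Definition eta (V : finType) (e : rel V) (u v : V) : nat := #|nbhd e u :&: nbhd e v|.

(* multiplicity of the edge uv of the factor graph: sigma_uv = (d_u - eta)(d_v - eta) *)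
Definition sigma (V : finType) (e : rel V) (u v : V) : nat :=
  (deg e u - eta e u v) * (deg e v - eta e u v).

Definition phi_adj (V : finType) (e : rel V) (I : {set V}) (u v : V) : bool :=
  [&& u \in I, v \in I, u != v & 0 < sigma e u v].

Definition induced_cycle (V : finType) (e : rel V) (I : {set V}) (c : seq V) : Prop :=
  let n := size c in
  [/\ 3 <= n, uniq c, {subset c <= I} &
      forall x0 i j, i < n -> j < n ->
        phi_adj e I (nth x0 c i) (nth x0 c j) =
          ((j == i.+1 %% n) || (i == j.+1 %% n))].

(* sigma_uv > 0 exactly when the neighbourhoods N_u and N_v are
   incomparable under inclusion, so Phi(S) is the incomparability graph of
   the preorder u <= v iff N_u is a subset of N_v.  An induced 5-cycle there makes the
   complementary 5-cycle 0-2-4-1-3-0 consist of comparable pairs; by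
   transitivity each vertex of it must be a source or a sink for the inclusion
   order, i.e. the orientations alternate around a cycle of odd length,
   which is impossible. *)
From mathcomp Require Import all_boot.

Set Implicit Arguments.
Unset Strict Implicit.
Unset Printing Implicit Defensive.

Lemma subn_card_setI_gt0 (T : finType) (A B : {set T}) :
  (0 < #|A| - #|A :&: B|) = ~~ (A \subset B).
Proof.
have [le_AB_A eq_AB_A] := subset_leqif_cards (subsetIl A B).
by rewrite subn_gt0 ltn_neqAle le_AB_A andbT eq_AB_A -(sameP setIidPl eqP).
Qed.

Section IncomparabilityGraph.

Variables (T : Type) (le : rel T).
Hypothesis le_trans : transitive le.

Lemma orientation_flip_at (x y z : T) :
  ~~ le x z -> ~~ le z x -> le x y || le y x -> le y z || le z y ->
  le y z = ~~ le x y.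
Proof.
move=> nle_xz nle_zx cmp_xy cmp_yz.
have [le_xy | nle_xy] /= := boolP (le x y).
  by apply/negP => le_yz; rewrite (le_trans le_xy le_yz) in nle_xz.
have le_yx : le y x by move: cmp_xy; rewrite (negbTE nle_xy).
have nle_zy : ~~ le z y.
  by apply/negP => le_zy; rewrite (le_trans le_zy le_yx) in nle_zx.
by move: cmp_yz; rewrite (negbTE nle_zy) orbF.
Qed.

Lemma incomparability_graph_C5_free (a : nat -> T) :
  (forall i, i < 5 -> ~~ le (a i) (a (i.+1 %% 5)) && ~~ le (a (i.+1 %% 5)) (a i)) ->
  (forall i, i < 5 -> le (a i) (a (i.+2 %% 5)) || le (a (i.+2 %% 5)) (a i)) ->
  False.
Proof.
move=> incmp cmp.
have flip i : i < 5 ->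
    le (a (i.+2 %% 5)) (a (i.+4 %% 5)) = ~~ le (a i) (a (i.+2 %% 5)).
  have lt_mod5 k : k %% 5 < 5 by rewrite ltn_pmod.
  move=> lt_i5; apply: orientation_flip_at (cmp _ lt_i5) _;
    move: (incmp _ (lt_mod5 i.+4)) (cmp _ (lt_mod5 i.+2));
    by case: i lt_i5 => [|[|[|[|[|]]]]] // _ /andP[].
move: (flip 0 isT) (flip 2 isT) (flip 4 isT) (flip 1 isT) (flip 3 isT) => /=.
by case: (le (a 0) (a 2)) => -> -> -> -> .
Qed.

End IncomparabilityGraph.

Lemma sigma_gt0 (V : finType) (e : rel V) (u v : V) :
  (0 < sigma e u v) =
    ~~ (nbhd e u \subset nbhd e v) && ~~ (nbhd e v \subset nbhd e u).
Proof.
by rewrite /sigma muln_gt0 /eta /deg subn_card_setI_gt0 setIC subn_card_setI_gt0.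
Qed.

Section FactorGraph.

Variables (V : finType) (e : rel V) (I : {set V}).

Lemma phi_adj_incomparable (u v : V) :
  phi_adj e I u v ->
  ~~ (nbhd e u \subset nbhd e v) && ~~ (nbhd e v \subset nbhd e u).
Proof. by case/and4P=> _ _ _; rewrite sigma_gt0. Qed.

Lemma phi_nonadj_comparable (u v : V) :
  u \in I -> v \in I -> u != v -> ~~ phi_adj e I u v ->
  (nbhd e u \subset nbhd e v) || (nbhd e v \subset nbhd e u).
Proof.
by move=> uI vI neq_uv; rewrite /phi_adj uI vI neq_uv sigma_gt0 /= negb_and !negbK.
Qed.

Variables (c : seq V) (x0 : V).
Hypothesis c_induced : induced_cycle e I c.

Lemma induced_cycle_succ_incomparable (i : nat) : i < size c ->
  ~~ (nbhd e (nth x0 c i) \subset nbhd e (nth x0 c (i.+1 %% size c))) &&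
  ~~ (nbhd e (nth x0 c (i.+1 %% size c)) \subset nbhd e (nth x0 c i)).
Proof.
have [_ _ _ c_adj] := c_induced; move=> lt_i_c.
have lt_succ : i.+1 %% size c < size c by rewrite ltn_pmod // (leq_ltn_trans _ lt_i_c).
by apply: phi_adj_incomparable; rewrite c_adj ?eqxx.
Qed.

Lemma induced_cycle_nonconsecutive_comparable (i j : nat) :
  i < size c -> j < size c -> i != j -> j != i.+1 %% size c -> i != j.+1 %% size c ->
  (nbhd e (nth x0 c i) \subset nbhd e (nth x0 c j)) ||
  (nbhd e (nth x0 c j) \subset nbhd e (nth x0 c i)).
Proof.
have [_ c_uniq c_sub c_adj] := c_induced; move=> lt_i_c lt_j_c neq_ij nsucc_ij nsucc_ji.
apply: phi_nonadj_comparable; rewrite ?c_sub ?mem_nth ?nth_uniq //.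
by rewrite c_adj // negb_or nsucc_ij.
Qed.

End FactorGraph.

Theorem lemma3p2 (V : finType) (e : rel V) (K I : {set V}) (c : seq V) :
  split_graph e K I -> induced_cycle e I c -> size c <> 5.
Proof.
move=> _ c_induced size_c; case: c c_induced size_c => [// | x0 s] c_induced size_c.
pose a i := nbhd e (nth x0 (x0 :: s) i).
have sub_trans : transitive (fun A B : {set V} => A \subset B).
  by move=> B A C; apply: subset_trans.
apply: (incomparability_graph_C5_free sub_trans (a := a))
  => i lt_i5; rewrite /a -size_c.
- by apply: (induced_cycle_succ_incomparable _ c_induced); rewrite size_c.
- apply: (induced_cycle_nonconsecutive_comparable _ c_induced);
    rewrite ?ltn_pmod ?size_c //.
  all: by case: i lt_i5 => [|[|[|[|[|]]]]].
Qed.
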